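(* Let $M\in\mathbb{N}$, $M\ge2$, and let $r$ be a strong solution of the BVP. Then the function $z$ (viewed as a radial function $x\mapsto z(|x|)$ on $\overline B\setminus\{0\}$) satisfies the strong maximum principle on $\overline B\setminus\{0\}$: if $z$ attains its maximum over a connected open set $U\subset B\setminus\{0\}$ at a point of $U$, then $z$ is constant on $U$.
   Context: Let $B\subset\mathbb{R}^2$ be the open unit ball. Fix constants $\gamma>0$, $s_0\ge0$, $\kappa\ge-\gamma s_0$ and a convex function $\rho\in C^\infty(\mathbb{R})$ with $\rho(s)=0$ for $s\le0$, $\rho(s)=\gamma s+\kappa$ for $s\ge s_0$, and $\rho=\rho_1$ on $[0,s_0]$ where $\rho_1$ is smooth and convex with $\rho_1(0)=0$, $\rho_1(s_0)=\gamma s_0+\kappa$. For $M\in\mathbb{N}\setminus\{0\}$ and a function $r$ on $(0,1]$ let $d(R)=\frac{Mr(R)\dot r(R)}{R}$ and $Lr(R)=\frac{M^2r}{R}-\dot r-R\ddot r$. A strong solution of the BVP is a function $r\in C([0,1])\cap C^\infty((0,1])$ with $Lr=M\rho''(d)\dot d\,r$ on $(0,1)$, $r(0)=0$ and $r(1)=1$. Let $f(s)=s\rho'(s)-\rho(s)$ and $z(R)=\frac{\dot r(R)^2}{2}+\frac{M^2r(R)^2}{2R^2}+f(d(R))$ for $R\in(0,1]$; this equals $\frac12|\nabla u|^2+f(\det\nabla u)$ for $u=r(R)(\cos M\theta,\sin M\theta)^T$. *)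

From Stdlib Require Import Reals.
From Coquelicot Require Import Coquelicot.
Open Scope R_scope.

Definition smooth_R (f : R -> R) : Prop := forall (n : nat) (x : R), ex_derive_n f n x.

Definition convex_R (f : R -> R) : Prop :=
  forall x y t : R, 0 <= t <= 1 -> f (t * x + (1 - t) * y) <= t * f x + (1 - t) * f y.

(* The standing assumptions on rho, with constants gamma, s0, kappa.
   (The auxiliary rho_1 of the paper is just the restriction of rho to [0,s0];
   its properties follow from those of rho.) *)
Definition admissible_rho (gamma s0 kappa : R) (rho : R -> R) : Prop :=
  0 < gamma /\ 0 <= s0 /\ kappa >= - gamma * s0 /\
  smooth_R rho /\ convex_R rho /\
  (forall s, s <= 0 -> rho s = 0) /\
  (forall s, s >= s0 -> rho s = gamma * s + kappa).

(* C^infinity on (0,1]: all derivatives exist on (0,1) and each extends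
   continuously (has a finite left limit) at 1. *)
Definition smooth_0_1 (r : R -> R) : Prop :=
  (forall (n : nat) (x : R), 0 < x < 1 -> ex_derive_n r n x) /\
  (forall n : nat, exists l : R,
      filterlim (Derive_n r n) (at_left 1) (locally l)).

Definition continuous_0_1 (r : R -> R) : Prop :=
  forall x, 0 <= x <= 1 ->
    filterlim r (within (fun y => 0 <= y <= 1) (locally x)) (locally (r x)).

Definition dfun (M : nat) (r : R -> R) (x : R) : R :=
  INR M * r x * Derive r x / x.

Definition Lop (M : nat) (r : R -> R) (x : R) : R :=
  (INR M) ^ 2 * r x / x - Derive r x - x * Derive (Derive r) x.

Definition strong_solution (M : nat) (rho : R -> R) (r : R -> R) : Prop :=
  continuous_0_1 r /\ smooth_0_1 r /\
  (forall x, 0 < x < 1 ->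
     Lop M r x = INR M * Derive_n rho 2 (dfun M r x) * Derive (dfun M r) x * r x) /\
  r 0 = 0 /\ r 1 = 1.

Definition ffun (rho : R -> R) (s : R) : R := s * Derive rho s - rho s.

Definition zfun (M : nat) (rho r : R -> R) (x : R) : R :=
  (Derive r x) ^ 2 / 2 + (INR M) ^ 2 * (r x) ^ 2 / (2 * x ^ 2) + ffun rho (dfun M r x).

Definition norm2 (x : R * R) : R := sqrt (fst x ^ 2 + snd x ^ 2).

Definition connected2 (U : R * R -> Prop) : Prop :=
  forall V W : R * R -> Prop, open V -> open W ->
    (forall x, U x -> V x \/ W x) ->
    (forall x, U x -> V x -> W x -> False) ->
    (forall x, U x -> ~ V x) \/ (forall x, U x -> ~ W x).

(* Along a solution, [x z'(x) = w(x) := 2 M r' b - r'^2 - b^2] with [b = M r / x], and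
   the equation, [rho'' >= 0] (from convexity) and [M >= 1] give a linear differential
   inequality [w' + c w >= 0] with continuous [c]. With the integrating factor
   [exp (RInt c R0)], a zero [R0] of [w] forces [w <= 0] left of [R0] and [w >= 0] right
   of it, so every critical point of [z] is a global minimum on [(0,1)]. An interior
   maximum of [x |-> z(|x|)] on an open set makes [|x0|] such a critical point, so [z]
   is constant there. *)

From Stdlib Require Import Reals Lra Psatz.
From Coquelicot Require Import Coquelicot.
Open Scope R_scope.

Lemma is_derive_continuity_pt (f : R -> R) x l : is_derive f x l -> continuity_pt f x.
Proof.
  intros Hf. apply derivable_continuous_pt. exists l. now apply is_derive_Reals.
Qed.

Lemma MVT_segment (f df : R -> R) a b : a < b ->
  (forall t, a <= t <= b -> is_derive f t (df t)) ->
  exists c, a <= c <= b /\ f b - f a = df c * (b - a).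
Proof.
  intros Hab Hf.
  destruct (MVT_gen f a b df) as [c [Hc E]];
    rewrite ?Rmin_left, ?Rmax_right in * by lra.
  - intros t Ht. apply Hf; lra.
  - intros t Ht. apply (is_derive_continuity_pt _ _ (df t)), Hf; lra.
  - now exists c.
Qed.

Lemma nondecreasing_of_derive_ge0 (f df : R -> R) a b : a <= b ->
  (forall t, a <= t <= b -> is_derive f t (df t)) ->
  (forall t, a <= t <= b -> 0 <= df t) -> f a <= f b.
Proof.
  intros Hab Hf Hdf. destruct (Req_dec a b) as [->|Hne]; [lra|].
  destruct (MVT_segment f df a b) as [c [Hc E]]; [lra|exact Hf|].
  assert (0 <= df c) by (apply Hdf; lra). nra.
Qed.

Lemma nonincreasing_of_derive_le0 (f df : R -> R) a b : a <= b ->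
  (forall t, a <= t <= b -> is_derive f t (df t)) ->
  (forall t, a <= t <= b -> df t <= 0) -> f b <= f a.
Proof.
  intros Hab Hf Hdf.
  enough (- f a <= - f b) by lra.
  apply (nondecreasing_of_derive_ge0 (fun t => - f t) (fun t => - df t)); [exact Hab| |].
  - intros t Ht. apply (is_derive_opp f t (df t)), Hf, Ht.
  - intros t Ht. specialize (Hdf t Ht). lra.
Qed.

Lemma is_derive_local_max_eq0 (f : R -> R) x l d : 0 < d ->
  (forall t, Rabs (t - x) < d -> f t <= f x) -> is_derive f x l -> l = 0.
Proof.
  intros Hd Hmax Hf.
  pose proof (proj1 (is_derive_Reals _ _ _) Hf) as Hf'.
  pose (pr := exist _ l Hf' : derivable_pt f x).
  change l with (derive_pt f x pr).
  apply (deriv_maximum f (x - d) (x + d)); try lra.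
  intros t Ht1 Ht2. apply Hmax, Rabs_def1; lra.
Qed.

Lemma is_derive_neg_locally_decreasing (g : R -> R) s k : is_derive g s k -> k < 0 ->
  exists d, 0 < d /\ forall h, 0 < h < d -> g (s + h) < g s < g (s - h).
Proof.
  intros Hg Hk. apply is_derive_Reals in Hg.
  destruct (Hg (- k)) as [d Hd]; [lra|].
  exists d. split; [apply cond_pos|]. intros h Hh.
  assert (Hq : forall u, u <> 0 -> Rabs u < d -> (g (s + u) - g s) / u < 0).
  { intros u Hu Hud. specialize (Hd u Hu Hud). apply Rabs_def2 in Hd. lra. }
  assert (Hp := Hq h ltac:(lra) ltac:(rewrite Rabs_pos_eq; lra)).
  assert (Hm := Hq (- h) ltac:(lra) ltac:(rewrite Rabs_Ropp, Rabs_pos_eq; lra)).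
  replace (s + - h) with (s - h) in Hm by ring.
  assert (E1 : g (s + h) - g s = (g (s + h) - g s) / h * h) by (field; lra).
  assert (E2 : g (s - h) - g s = - ((g (s - h) - g s) / - h * h)) by (field; lra).
  nra.
Qed.

Lemma convex_Derive2_ge0 (f : R -> R) : (forall x, ex_derive f x) ->
  (forall x, ex_derive (Derive f) x) -> convex_R f ->
  forall s, 0 <= Derive (Derive f) s.
Proof.
  intros Hf1 Hf2 Hconv s.
  destruct (Rle_or_lt 0 (Derive (Derive f) s)) as [|Hneg]; [assumption|exfalso].
  destruct (is_derive_neg_locally_decreasing (Derive f) s _ (Derive_correct _ _ (Hf2 s)) Hneg)
    as [d [Hd Hdecr]].
  set (phi := fun h => f (s + h) + f (s - h) - 2 * f s).
  set (dphi := fun h => Derive f (s + h) - Derive f (s - h)).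
  assert (Hphi_ge0 : forall h, 0 <= phi h).
  { intro h. assert (C := Hconv (s + h) (s - h) (1 / 2) ltac:(lra)).
    replace (1 / 2 * (s + h) + (1 - 1 / 2) * (s - h)) with s in C by field.
    unfold phi. lra. }
  assert (Hdphi : forall h, is_derive phi h (dphi h)).
  { intro h. unfold phi, dphi. auto_derive.
    - repeat split; apply Hf1.
    - change (Derive (fun x => f x)) with (Derive f).
      replace (s + - h) with (s - h) by ring. ring. }
  assert (Hdphi_neg : forall h, 0 < h < d -> dphi h < 0).
  { intros h Hh. specialize (Hdecr h Hh). unfold dphi. lra. }
  set (h := d / 2).
  assert (Hhalf : phi (h / 2) <= phi 0).
  { apply (nonincreasing_of_derive_le0 phi dphi); [unfold h; lra|intros; apply Hdphi|].
    intros t Ht. destruct (Req_dec t 0) as [->|Ht0].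
    - unfold dphi. replace (s + 0) with (s - 0) by ring. lra.
    - apply Rlt_le, Hdphi_neg. unfold h in *; lra. }
  destruct (MVT_segment phi dphi (h / 2) h) as [c [Hc E]];
    [unfold h; lra|intros; apply Hdphi|].
  assert (dphi c < 0) by (apply Hdphi_neg; unfold h in *; lra).
  assert (phi 0 = 0) by (unfold phi; rewrite Rplus_0_r, Rminus_0_r; ring).
  specialize (Hphi_ge0 h). unfold h in *. nra.
Qed.

Lemma is_derive_RInt_interior (c : R -> R) a b t0 :
  (forall t, a < t < b -> continuous c t) -> a < t0 < b ->
  forall t, a < t < b -> is_derive (RInt c t0) t (c t).
Proof.
  intros Hc Ht0 t Ht. apply (is_derive_RInt c (RInt c t0) t0 t); [|now apply Hc].
  assert (He : 0 < Rmin (t - a) (b - t)) by (apply Rmin_glb_lt; lra).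
  exists (mkposreal _ He). intros u Hu. change (Rabs (u - t) < Rmin (t - a) (b - t)) in Hu.
  pose proof (Rmin_l (t - a) (b - t)). pose proof (Rmin_r (t - a) (b - t)).
  apply Rabs_def2 in Hu.
  apply (@RInt_correct R_CompleteNormedModule), (@ex_RInt_continuous R_CompleteNormedModule).
  intros v Hv. apply Hc. split.
  - apply Rlt_le_trans with (Rmin t0 u); [apply Rmin_glb_lt|]; lra.
  - apply Rle_lt_trans with (Rmax t0 u); [|apply Rmax_lub_lt]; lra.
Qed.

(* Integrating factor: [exp (RInt c t0 t) * w t] is nondecreasing, so [w] has the
   sign of [t - t0] once it vanishes at [t0]. *)
Lemma linear_diff_ineq_sign (w c : R -> R) a b t0 :
  (forall t, a < t < b -> continuous c t) ->
  (forall t, a < t < b -> ex_derive w t /\ 0 <= Derive w t + c t * w t) ->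
  a < t0 < b -> w t0 = 0 ->
  forall t, a < t < b -> (t0 <= t -> 0 <= w t) /\ (t <= t0 -> w t <= 0).
Proof.
  intros Hc Hw Ht0 Hw0.
  set (g := fun t => exp (RInt c t0 t) * w t).
  set (dg := fun t => exp (RInt c t0 t) * (Derive w t + c t * w t)).
  assert (Hdg : forall t, a < t < b -> is_derive g t (dg t)).
  { intros t Ht. unfold g, dg. evar_last.
    { apply (is_derive_mult (fun t => exp (RInt c t0 t)) w).
      - apply (is_derive_comp exp (RInt c t0)); [apply is_derive_exp|].
        now apply (is_derive_RInt_interior c a b).
      - apply Derive_correct, Hw, Ht.
      - intros; apply Rmult_comm. }
    simpl. unfold plus, mult, scal; simpl. unfold mult; simpl. ring. }
  assert (Hdg_ge0 : forall t, a < t < b -> 0 <= dg t).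
  { intros t Ht. apply Rmult_le_pos; [apply Rlt_le, exp_pos|apply Hw, Ht]. }
  assert (Hg0 : g t0 = 0) by (unfold g; rewrite Hw0; ring).
  intros t Ht. pose proof (exp_pos (RInt c t0 t)).
  split; intro Hle.
  - assert (g t0 <= g t).
    { apply (nondecreasing_of_derive_ge0 g dg); [lra| |];
        intros u Hu; [apply Hdg|apply Hdg_ge0]; lra. }
    unfold g in *. nra.
  - assert (g t <= g t0).
    { apply (nondecreasing_of_derive_ge0 g dg); [lra| |];
        intros u Hu; [apply Hdg|apply Hdg_ge0]; lra. }
    unfold g in *. nra.
Qed.

Lemma Rabs_le_norm2 x : Rabs (fst x) <= norm2 x /\ Rabs (snd x) <= norm2 x.
Proof.
  unfold norm2. split; rewrite <- sqrt_Rsqr_abs; apply sqrt_le_1_alt;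
    unfold Rsqr; nra.
Qed.

Lemma norm2_scale l x : 0 <= l -> norm2 (l * fst x, l * snd x) = l * norm2 x.
Proof.
  intros Hl. unfold norm2; simpl.
  replace (l * fst x * (l * fst x * 1) + l * snd x * (l * snd x * 1))
    with (l ^ 2 * (fst x * (fst x * 1) + snd x * (snd x * 1))) by ring.
  rewrite sqrt_mult_alt by apply pow2_ge_0. now rewrite sqrt_pow2.
Qed.

(* Rescaling [x0] moves it by at most [|t - |x0||] in each coordinate, so an open
   set around [x0] contains points of every nearby norm [t]. *)
Lemma radial_local_max (U : R * R -> Prop) (F : R -> R) x0 :
  open U -> U x0 -> 0 < norm2 x0 ->
  (forall x, U x -> F (norm2 x) <= F (norm2 x0)) ->
  exists d, 0 < d /\ forall t, Rabs (t - norm2 x0) < d -> F t <= F (norm2 x0).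
Proof.
  intros HU Hx0 Hpos Hmax.
  destruct (HU x0 Hx0) as [eps Heps]. pose proof (cond_pos eps).
  set (R0 := norm2 x0) in *.
  exists (Rmin eps R0). split; [apply Rmin_glb_lt; lra|]. intros t Ht.
  pose proof (Rmin_l eps R0). pose proof (Rmin_r eps R0).
  assert (Htpos : 0 < t) by (apply Rabs_def2 in Ht; lra).
  set (l := t / R0).
  assert (Hl : 0 < l) by (unfold l; apply Rdiv_lt_0_compat; lra).
  assert (Hmove : forall u, Rabs u <= R0 -> Rabs (l * u - u) < eps).
  { intros u Hu.
    replace (l * u - u) with ((t - R0) * (u / R0)) by (unfold l; field; lra).
    rewrite Rabs_mult, Rabs_div, (Rabs_pos_eq R0) by lra.
    assert (Rabs u / R0 <= 1) by (apply (proj1 (Rdiv_le_1 _ _ Hpos)), Hu).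
    pose proof (Rabs_pos (t - R0)). pose proof (Rabs_pos u). nra. }
  destruct (Rabs_le_norm2 x0) as [Hfst Hsnd].
  assert (Hnorm : norm2 (l * fst x0, l * snd x0) = t).
  { rewrite norm2_scale by lra. fold R0. unfold l. field. lra. }
  rewrite <- Hnorm.
  apply Hmax, Heps. split; apply Hmove; assumption.
Qed.

Lemma zprime_identity m x a a1 b k : x <> 0 ->
  x * a1 + k * b * (x * a1 * b + a * (m * a - b)) = m * b - a ->
  a * a1 + b * ((m * a - b) / x) + a * b * k * (a1 * b + a * ((m * a - b) / x))
  = (2 * m * a * b - a ^ 2 - b ^ 2) / x.
Proof.
  intros Hx Hode.
  transitivity ((a * (x * a1 + k * b * (x * a1 * b + a * (m * a - b))) + b * (m * a - b)) / x).
  - field. exact Hx.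
  - rewrite Hode. field. exact Hx.
Qed.

(* Solving the equation for [a1] turns the left-hand side into
   [2 ((a - m b)^2 + k (m^2 - 1) (a b)^2 + (1 + k b^2) (m a - b)^2) / (x (1 + k b^2))]. *)
Lemma wprime_ineq_algebra m x a a1 b k : 0 < x -> 0 <= k -> 1 <= m ->
  x * a1 + k * b * (x * a1 * b + a * (m * a - b)) = m * b - a ->
  0 <= 2 * m * (a1 * b + a * ((m * a - b) / x)) - 2 * a * a1 - 2 * b * ((m * a - b) / x)
       + 2 * k * m * a * b / (x * (1 + k * b ^ 2)) * (2 * m * a * b - a ^ 2 - b ^ 2).
Proof.
  intros Hx Hk Hm Hode.
  assert (Hq : 0 < 1 + k * b ^ 2) by nra.
  assert (Ha1 : a1 = (m * b - a - k * a * b * (m * a - b)) / (x * (1 + k * b ^ 2))).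
  { replace (m * b - a - k * a * b * (m * a - b)) with (a1 * (x * (1 + k * b ^ 2)))
      by (rewrite <- Hode; ring).
    field. split; lra. }
  subst a1.
  match goal with |- 0 <= ?e =>
    replace e with (2 * ((a - m * b) ^ 2 + k * (m ^ 2 - 1) * (a * b) ^ 2
                         + (1 + k * b ^ 2) * (m * a - b) ^ 2) / (x * (1 + k * b ^ 2)))
      by (field; split; lra) end.
  apply Rdiv_le_0_compat; [|nra].
  pose proof (pow2_ge_0 (a - m * b)). pose proof (pow2_ge_0 (m * a - b)).
  assert (0 <= k * (m ^ 2 - 1) * (a * b) ^ 2).
  { apply Rmult_le_pos; [apply Rmult_le_pos; nra|apply pow2_ge_0]. }
  nra.
Qed.

(* [angular M r x = M r / x] is the angular part of [∇u]: [d = r' * angular] and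
   [z = (r'^2 + angular^2) / 2 + f d]. *)
Definition angular (M : nat) (r : R -> R) (x : R) : R := INR M * r x / x.

Definition wfun (M : nat) (r : R -> R) (x : R) : R :=
  2 * INR M * Derive r x * angular M r x - Derive r x ^ 2 - angular M r x ^ 2.

(* The coefficient for which [w' + c w] becomes a sum of squares (wprime_ineq_algebra). *)
Definition cfun (M : nat) (rho r : R -> R) (x : R) : R :=
  2 * Derive (Derive rho) (dfun M r x) * INR M * Derive r x * angular M r x
  / (x * (1 + Derive (Derive rho) (dfun M r x) * angular M r x ^ 2)).

Lemma dfun_angular M r x : dfun M r x = Derive r x * angular M r x.
Proof. unfold dfun, angular, Rdiv. ring. Qed.

Lemma zfun_angular M rho r x : x <> 0 ->
  zfun M rho r x = Derive r x ^ 2 / 2 + angular M r x ^ 2 / 2 + ffun rho (dfun M r x).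
Proof. intros Hx. unfold zfun, angular. field. exact Hx. Qed.

Lemma is_derive_ffun rho s : ex_derive rho s -> ex_derive (Derive rho) s ->
  is_derive (ffun rho) s (s * Derive (Derive rho) s).
Proof.
  intros H1 H2. unfold ffun. auto_derive.
  - repeat split; assumption.
  - change (Derive (fun x => rho x)) with (Derive rho).
    change (Derive (fun x => Derive rho x)) with (Derive (Derive rho)). ring.
Qed.

Section RadialEnergy.

Variables (M : nat) (rho r : R -> R).
Hypothesis M_ge1 : (1 <= M)%nat.
Hypothesis rho_smooth : smooth_R rho.
Hypothesis rho2_ge0 : forall s, 0 <= Derive (Derive rho) s.
Hypothesis r_smooth : forall n x, 0 < x < 1 -> ex_derive_n r n x.
Hypothesis r_ode : forall x, 0 < x < 1 ->
  Lop M r x = INR M * Derive_n rho 2 (dfun M r x) * Derive (dfun M r) x * r x.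

Lemma is_derive_angular x : 0 < x < 1 ->
  is_derive (angular M r) x ((INR M * Derive r x - angular M r x) / x).
Proof.
  intros Hx. unfold angular. auto_derive.
  - split; [exact (r_smooth 1 x Hx)|split; [lra|exact I]].
  - change (Derive (fun t => r t) x) with (Derive r x). field. lra.
Qed.

Lemma is_derive_dfun x : 0 < x < 1 ->
  is_derive (dfun M r) x (Derive (Derive r) x * angular M r x
                          + Derive r x * ((INR M * Derive r x - angular M r x) / x)).
Proof.
  intros Hx.
  apply (is_derive_ext (fun t => Derive r t * angular M r t)); [intro t; symmetry; apply dfun_angular|].
  evar_last.
  { apply (is_derive_mult (Derive r) (angular M r)).
    - apply Derive_correct, (r_smooth 2 x Hx).
    - apply is_derive_angular, Hx.
    - intros; apply Rmult_comm. }
  simpl. unfold plus, mult; simpl. ring.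
Qed.

Lemma ode_angular x : 0 < x < 1 ->
  x * Derive (Derive r) x + Derive (Derive rho) (dfun M r x) * angular M r x
    * (x * Derive (Derive r) x * angular M r x
       + Derive r x * (INR M * Derive r x - angular M r x))
  = INR M * angular M r x - Derive r x.
Proof.
  intros Hx.
  assert (Hm : INR M <> 0) by (apply not_0_INR; lia).
  pose proof (r_ode x Hx) as Hode. unfold Lop in Hode.
  rewrite (is_derive_unique _ _ _ (is_derive_dfun x Hx)) in Hode.
  change (Derive_n rho 2) with (Derive (Derive rho)) in Hode.
  set (k := Derive (Derive rho) (dfun M r x)) in *.
  set (a := Derive r x) in *. set (a1 := Derive (Derive r) x) in *.
  set (d1 := a1 * angular M r x + a * ((INR M * a - angular M r x) / x)) in *.
  replace (k * angular M r x * (x * a1 * angular M r x + a * (INR M * a - angular M r x)))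
    with (INR M * k * d1 * r x) by (unfold d1, angular; field; lra).
  rewrite <- Hode. unfold angular. field. lra.
Qed.

Lemma is_derive_zfun x : 0 < x < 1 -> is_derive (zfun M rho r) x (wfun M r x / x).
Proof.
  intros Hx.
  apply (is_derive_ext_loc
           (fun t => Derive r t ^ 2 / 2 + angular M r t ^ 2 / 2 + ffun rho (dfun M r t))).
  { apply (filter_imp (fun t => 0 < t)); [intros t Ht; symmetry; apply zfun_angular; lra|].
    apply open_gt. lra. }
  auto_derive.
  - repeat split.
    + exact (r_smooth 2 x Hx).
    + eexists; apply is_derive_angular, Hx.
    + eexists; apply is_derive_ffun; [exact (rho_smooth 1%nat _)|exact (rho_smooth 2%nat _)].
    + eexists; apply is_derive_dfun, Hx.
  - change (Derive (fun t => Derive r t)) with (Derive (Derive r)).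
    change (Derive (fun t => angular M r t)) with (Derive (angular M r)).
    change (Derive (fun t => dfun M r t)) with (Derive (dfun M r)).
    change (Derive (fun t => ffun rho t)) with (Derive (ffun rho)).
    rewrite (is_derive_unique _ _ _ (is_derive_angular x Hx)),
      (is_derive_unique _ _ _ (is_derive_dfun x Hx)),
      (is_derive_unique _ _ _ (is_derive_ffun rho _ (rho_smooth 1%nat _) (rho_smooth 2%nat _))).
    assert (Hx0 : x <> 0) by lra.
    unfold wfun. rewrite <- (zprime_identity _ _ _ _ _ _ Hx0 (ode_angular x Hx)).
    rewrite dfun_angular. field. exact Hx0.
Qed.

Lemma wfun_diff_ineq x : 0 < x < 1 ->
  ex_derive (wfun M r) x /\ 0 <= Derive (wfun M r) x + cfun M rho r x * wfun M r x.
Proof.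
  intros Hx.
  set (a := Derive r x). set (a1 := Derive (Derive r) x). set (b := angular M r x).
  set (b1 := (INR M * a - b) / x).
  assert (Hw : is_derive (wfun M r) x (2 * INR M * (a1 * b + a * b1) - 2 * a * a1 - 2 * b * b1)).
  { unfold wfun. auto_derive.
    - repeat split; first [exact (r_smooth 2 x Hx) | eexists; apply is_derive_angular, Hx].
    - change (Derive (fun t => Derive r t)) with (Derive (Derive r)).
      change (Derive (fun t => angular M r t)) with (Derive (angular M r)).
      rewrite (is_derive_unique _ _ _ (is_derive_angular x Hx)). fold a a1 b b1. ring. }
  split; [eexists; exact Hw|].
  rewrite (is_derive_unique _ _ _ Hw).
  unfold cfun, wfun. rewrite dfun_angular. fold a b.
  apply wprime_ineq_algebra; [lra|apply rho2_ge0|apply (le_INR 1); lia|].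
  pose proof (ode_angular x Hx) as Hode. rewrite dfun_angular in Hode. exact Hode.
Qed.

Lemma cfun_continuous x : 0 < x < 1 -> continuous (cfun M rho r) x.
Proof.
  intros Hx.
  apply (@ex_derive_continuous R_AbsRing R_NormedModule).
  assert (Hden : 0 < 1 + Derive (Derive rho) (dfun M r x) * angular M r x ^ 2).
  { pose proof (rho2_ge0 (dfun M r x)). pose proof (pow2_ge_0 (angular M r x)). nra. }
  unfold cfun. auto_derive.
  repeat split; try first
    [ exact (rho_smooth 3%nat _) | exact (r_smooth 2 x Hx)
    | eexists; apply is_derive_angular, Hx | eexists; apply is_derive_dfun, Hx ].
  apply Rmult_integral_contrapositive. split; [lra|]. simpl in Hden. lra.
Qed.

Lemma zfun_min_at_critical x0 : 0 < x0 < 1 -> wfun M r x0 = 0 ->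
  forall x, 0 < x < 1 -> zfun M rho r x0 <= zfun M rho r x.
Proof.
  intros Hx0 Hw0 x Hx.
  pose proof (linear_diff_ineq_sign (wfun M r) (cfun M rho r) 0 1 x0
                cfun_continuous wfun_diff_ineq Hx0 Hw0) as Hsign.
  set (dz := fun t => wfun M r t / t).
  assert (Hz : forall t, Rmin x0 x <= t <= Rmax x0 x -> is_derive (zfun M rho r) t (dz t)).
  { intros t Ht. apply is_derive_zfun.
    pose proof (Rmin_glb_lt x0 x 0). pose proof (Rmax_lub_lt x0 x 1). lra. }
  destruct (Rle_or_lt x0 x) as [Hle|Hlt].
  - rewrite Rmin_left, Rmax_right in Hz by lra.
    apply (nondecreasing_of_derive_ge0 _ dz); [exact Hle|exact Hz|].
    intros t Ht. apply Rdiv_le_0_compat; [apply (Hsign t)|]; lra.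
  - rewrite Rmin_right, Rmax_left in Hz by lra.
    apply (nonincreasing_of_derive_le0 _ dz); [lra|exact Hz|].
    intros t Ht. unfold dz, Rdiv.
    assert (wfun M r t <= 0) by (apply (Hsign t); lra).
    pose proof (Rinv_0_lt_compat t ltac:(lra)). nra.
Qed.

End RadialEnergy.

Theorem lemma2p4 (gamma s0 kappa : R) (rho : R -> R) (M : nat) (r : R -> R) :
  admissible_rho gamma s0 kappa rho ->
  (2 <= M)%nat ->
  strong_solution M rho r ->
  forall U : R * R -> Prop,
    open U -> connected2 U ->
    (forall x, U x -> 0 < norm2 x < 1) ->
    forall x0, U x0 ->
      (forall x, U x -> zfun M rho r (norm2 x) <= zfun M rho r (norm2 x0)) ->
      forall x, U x -> zfun M rho r (norm2 x) = zfun M rho r (norm2 x0).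
Proof.
  intros (_ & _ & _ & Hsmooth & Hconvex & _) HM (_ & (Hr & _) & Hode & _) U HU _ Hnorm x0 Hx0
    Hmax x Hx.
  assert (Hrho2 : forall s, 0 <= Derive (Derive rho) s).
  { apply convex_Derive2_ge0; [exact (Hsmooth 1%nat)|exact (Hsmooth 2%nat)|exact Hconvex]. }
  assert (HM1 : (1 <= M)%nat) by lia.
  pose proof (Hnorm x0 Hx0) as Hx0norm.
  destruct (radial_local_max U (zfun M rho r) x0 HU Hx0 ltac:(lra) Hmax) as [d [Hd Hloc]].
  assert (Hcrit : wfun M r (norm2 x0) = 0).
  { pose proof (is_derive_local_max_eq0 _ _ _ d Hd Hloc
                  (is_derive_zfun M rho r HM1 Hsmooth Hr Hode _ Hx0norm)) as H0.
    apply (Rmult_eq_reg_r (/ norm2 x0)); [|apply Rinv_neq_0_compat; lra].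
    rewrite Rmult_0_l. exact H0. }
  apply Rle_antisym; [exact (Hmax x Hx)|].
  exact (zfun_min_at_critical M rho r HM1 Hsmooth Hrho2 Hr Hode _ Hx0norm Hcrit _ (Hnorm x Hx)).
Qed.
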